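(* Let $G$ be a highly graceful graph. Then $G$ contains no subgraph isomorphic to any of the following graphs: (1) a cycle $C_n$ with $n \equiv 1$ or $2 \pmod 4$; (2) the union of two cycles $C_m$ and $C_n$ with $m, n \equiv 3 \pmod 4$ that have exactly one node in common; (3) the union of three cycles $C_l, C_m, C_n$ with $l \equiv 0 \pmod 4$ and $m, n \equiv 3 \pmod 4$, where $C_m$ and $C_n$ are node-disjoint and $C_l$ has exactly one node in common with each of $C_m$ and $C_n$.
   Context: Graphs are finite, undirected, without loops or multiple edges. A $(p,q)$-graph has $p$ nodes and $q$ edges. A graceful labeling of a $(p,q)$-graph $G$ is an injective map $\varphi: V(G) \to \{0,1,\dots,q\}$ such that the edge labels $|\varphi(u)-\varphi(v)|$, $uv \in E(G)$, are pairwise distinct (hence are exactly $1,\dots,q$); $G$ is graceful if it has a graceful labeling. A graph $G$ is highly graceful if every connected subgraph of $G$ (including $G$ itself) is graceful. *)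

From mathcomp Require Import all_boot.
Set Implicit Arguments. Unset Strict Implicit. Unset Printing Implicit Defensive.

(* The host graph: a finite simple graph given by a symmetric irreflexive
   relation [g] on a finite vertex type [T]. *)

(* A subgraph (V, E) of g: E is a set of ordered pairs, closed under
   reversal, so that each undirected edge {x,y} is represented by both
   (x,y) and (y,x); edges of E are edges of g with endpoints in V. *)
Definition subgraph (T : finType) (g : rel T) (V : {set T}) (E : {set T * T}) :=
  forall e, e \in E -> [/\ g e.1 e.2, e.1 \in V, e.2 \in V & (e.2, e.1) \in E].

Definition nedges (T : finType) (E : {set T * T}) : nat := #|E| %/ 2.

Definition sub_connected (T : finType) (V : {set T}) (E : {set T * T}) :=
  forall x y, x \in V -> y \in V -> connect (fun a b => (a, b) \in E) x y.

Definition absdiff (a b : nat) : nat := (a - b) + (b - a).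

Definition graceful_labeling (T : finType) (V : {set T}) (E : {set T * T})
    (f : T -> nat) :=
  [/\ {in V &, injective f},
      {in V, forall x, f x <= nedges E} &
      forall x y u v, (x, y) \in E -> (u, v) \in E ->
        absdiff (f x) (f y) = absdiff (f u) (f v) ->
        (u, v) = (x, y) \/ (u, v) = (y, x)].

Definition graceful (T : finType) (V : {set T}) (E : {set T * T}) :=
  exists f : T -> nat, graceful_labeling V E f.

Definition highly_graceful (T : finType) (g : rel T) :=
  forall (V : {set T}) (E : {set T * T}),
    subgraph g V E -> sub_connected V E -> graceful V E.

(* s = [:: v_0; ...; v_{n-1}] spans a subgraph of g isomorphic to the cycle
   C_n (n >= 3): distinct vertices with v_i ~ v_{i+1} and v_{n-1} ~ v_0. *)
Definition cycle_in (T : finType) (g : rel T) (s : seq T) :=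
  [&& 3 <= size s, uniq s & cycle g s].

Definition ncommon (T : finType) (s1 s2 : seq T) : nat :=
  #|[set x | (x \in s1) && (x \in s2)]|.

From mathcomp Require Import all_boot zify.
Set Implicit Arguments. Unset Strict Implicit. Unset Printing Implicit Defensive.

(* Cycles sharing at most one vertex share no edge, so each configuration is
   a connected graph with q = 1 or 2 (mod 4) edges, oriented along its cycles
   so that at every vertex as many arcs leave as enter.  If f were a graceful
   labeling, then |f x - f y| = f x + f y (mod 2), and summing over the arcs
   counts every f v once at a tail and once at a head; hence
   1 + ... + q = q (q + 1) / 2 would be even, forcing q = 0 or 3 (mod 4)
   (Rosa's parity condition). *)

Lemma absdiff_add_min a b : absdiff a b + 2 * minn a b = a + b.
Proof. rewrite /absdiff; lia. Qed.

Lemma dvd2_bin2_mod4 n : 2 %| 'C(n.+1, 2) -> n %% 4 = 0 \/ n %% 4 = 3.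
Proof.
rewrite bin2 -divn2 /=; move: (divn_eq n 4) (ltn_mod n 4).
by case: (n %% 4) => [|[|[|[|r]]]] // -> _; nia.
Qed.

Definition balanced (T : eqType) (L : seq (T * T)) := perm_eq (map fst L) (map snd L).

Lemma balanced_cat (T : eqType) (L1 L2 : seq (T * T)) :
  balanced L1 -> balanced L2 -> balanced (L1 ++ L2).
Proof. by rewrite /balanced !map_cat; apply: perm_cat. Qed.

Lemma balanced_graceful_mod4 (T : eqType) (f : T -> nat) (L : seq (T * T)) :
  balanced L ->
  perm_eq [seq absdiff (f e.1) (f e.2) | e <- L] (iota 1 (size L)) ->
  size L %% 4 = 0 \/ size L %% 4 = 3.
Proof.
move=> balL labL; apply: dvd2_bin2_mod4.
have sum_labels : \sum_(e <- L) absdiff (f e.1) (f e.2) = 'C((size L).+1, 2).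
  rewrite -(big_map (fun e => absdiff (f e.1) (f e.2)) predT id) (perm_big _ labL).
  by rewrite -bin2_sum /index_iota subn0 big_cons add0n.
have sum_heads : \sum_(e <- L) f e.2 = \sum_(e <- L) f e.1.
  by rewrite -(big_map snd predT f) -(perm_big _ balL) big_map.
have : 'C((size L).+1, 2) + 2 * \sum_(e <- L) minn (f e.1) (f e.2)
       = 2 * \sum_(e <- L) f e.1.
  rewrite -sum_labels big_distrr -big_split /= mul2n -addnn.
  rewrite -[X in _ = _ + X]sum_heads -big_split.
  by apply: eq_bigr => e _; rewrite absdiff_add_min.
lia.
Qed.

Section ArcLists.

Variable T : finType.
Implicit Types (g : rel T) (L : seq (T * T)) (s : seq T).

Definition edges_of L : {set T * T} := [set e | (e \in L) || (swap_pair e \in L)].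

Definition vertices_of L : {set T} := [set x in map fst L].

(* An edge {x, y} of [edges_of L] is listed in [L] once, as (x, y) or as (y, x). *)
Definition orients g L :=
  [/\ uniq L, {in L, forall e, g e.1 e.2} & {in L, forall e, swap_pair e \notin L}].

Definition eulerian_orientation g L :=
  [/\ orients g L, balanced L & sub_connected (vertices_of L) (edges_of L)].

Lemma edges_of_cat L1 L2 : edges_of (L1 ++ L2) = edges_of L1 :|: edges_of L2.
Proof. by apply/setP => e; rewrite !inE !mem_cat orbACA. Qed.

Lemma vertices_of_cat L1 L2 : vertices_of (L1 ++ L2) = vertices_of L1 :|: vertices_of L2.
Proof. by apply/setP => x; rewrite !inE map_cat mem_cat. Qed.

Lemma head_vertices_of L e : balanced L -> e \in L -> e.2 \in vertices_of L.
Proof. by move=> balL eL; rewrite inE (perm_mem balL) map_f. Qed.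

Lemma ends_edges_of L e : balanced L -> e \in edges_of L ->
  (e.1 \in vertices_of L) && (e.2 \in vertices_of L).
Proof.
case: e => x y balL; rewrite inE => /orP[] xyL;
  by rewrite (head_vertices_of balL xyL) inE (map_f fst xyL).
Qed.

Lemma nedges_edges_of L :
  uniq L -> {in L, forall e, swap_pair e \notin L} -> nedges (edges_of L) = size L.
Proof.
move=> uL asymL.
have swapK := can_inj (@swap_pairK T T).
have -> : edges_of L = [set e in L ++ map swap_pair L].
  apply/setP => e; rewrite !inE mem_cat; congr (_ || _).
  by rewrite -{2}[e]swap_pairK (mem_map swapK).
have uLL : uniq (L ++ map swap_pair L).
  rewrite cat_uniq uL (map_inj_uniq swapK) uL andbT /=.
  by apply/hasP => -[_ /mapP[e eL ->] /asymL]; rewrite swap_pairK eL.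
by rewrite /nedges cardsE (card_uniqP uLL) size_cat size_map addnn -mul2n mulKn.
Qed.

Lemma subgraph_orients g L : symmetric g -> orients g L -> balanced L ->
  subgraph g (vertices_of L) (edges_of L).
Proof.
move=> gsym [_ gL _] balL e eE; have /andP[e1V e2V] := ends_edges_of balL eE.
split=> //; last by move: eE; rewrite !inE swap_pairK orbC.
by move: eE; rewrite inE => /orP[/gL //|/gL]; rewrite gsym.
Qed.

Lemma graceful_labels_perm g L f : irreflexive g -> orients g L -> balanced L ->
  graceful_labeling (vertices_of L) (edges_of L) f ->
  perm_eq [seq absdiff (f e.1) (f e.2) | e <- L] (iota 1 (size L)).
Proof.
move=> girr [uL gL asymL] balL [finj fle flab].
rewrite nedges_edges_of // in fle.
have LE e : e \in L -> e \in edges_of L by rewrite inE => ->.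
have ulab : uniq [seq absdiff (f e.1) (f e.2) | e <- L].
  rewrite map_inj_in_uniq // => -[x y] [u v] xyL uvL /(flab _ _ _ _ (LE _ xyL) (LE _ uvL)).
  by case=> // uv_yx; move: (asymL _ xyL); rewrite /swap_pair /= -uv_yx uvL.
have lab_range e : e \in L -> 0 < absdiff (f e.1) (f e.2) <= size L.
  case: e => x y xyL; have /andP[xV yV] := ends_edges_of balL (LE _ xyL).
  have fne : f x != f y.
    by apply: contraTneq (gL _ xyL) => /finj <- //; rewrite girr.
  by move/eqP: fne (fle _ xV) (fle _ yV); rewrite /absdiff /=; lia.
apply: uniq_perm; rewrite ?iota_uniq //.
apply: (uniq_min_size ulab _ _).2; last by rewrite size_iota size_map.
by move=> _ /mapP[e eL ->]; rewrite mem_iota add1n ltnS lab_range.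
Qed.

Lemma eulerian_orientation_mod4 g L : symmetric g -> irreflexive g ->
  highly_graceful g -> eulerian_orientation g L -> size L %% 4 = 0 \/ size L %% 4 = 3.
Proof.
move=> gsym girr hG [orL balL conL].
have [f lab] := hG _ _ (subgraph_orients gsym orL balL) conL.
exact: balanced_graceful_mod4 balL (graceful_labels_perm girr orL balL lab).
Qed.

Lemma sub_connectedU (V1 V2 : {set T}) (E1 E2 : {set T * T}) c : c \in V1 -> c \in V2 ->
  sub_connected V1 E1 -> sub_connected V2 E2 -> sub_connected (V1 :|: V2) (E1 :|: E2).
Proof.
move=> cV1 cV2 con1 con2.
have mono (E F : {set T * T}) : E \subset F ->
    subrel (connect (fun a b => (a, b) \in E)) (connect (fun a b => (a, b) \in F)).
  by move=> /subsetP EF; apply: connect_sub => a b /EF; apply: connect1.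
have sub1 := mono _ _ (subsetUl E1 E2); have sub2 := mono _ _ (subsetUr E1 E2).
move=> x y; rewrite !inE => /orP[xV|xV] /orP[yV|yV].
- exact: sub1 (con1 _ _ xV yV).
- exact: connect_trans (sub1 _ _ (con1 _ _ xV cV1)) (sub2 _ _ (con2 _ _ cV2 yV)).
- exact: connect_trans (sub2 _ _ (con2 _ _ xV cV2)) (sub1 _ _ (con1 _ _ cV1 yV)).
- exact: sub2 (con2 _ _ xV yV).
Qed.

Lemma edge_disjoint_of_common_le1 g L1 L2 : irreflexive g ->
  balanced L1 -> balanced L2 -> {in L2, forall e, g e.1 e.2} ->
  #|vertices_of L1 :&: vertices_of L2| <= 1 -> {in L2, forall e, e \notin edges_of L1}.
Proof.
move=> girr bal1 bal2 gL2 common e eL2; apply/negP => eE1.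
have eE2 : e \in edges_of L2 by rewrite inE eL2.
have /andP[e1V1 e2V1] := ends_edges_of bal1 eE1.
have /andP[e1V2 e2V2] := ends_edges_of bal2 eE2.
have ne : e.1 != e.2 by apply: contraTneq (gL2 _ eL2) => ->; rewrite girr.
suff : [set e.1; e.2] \subset vertices_of L1 :&: vertices_of L2.
  by move/subset_leq_card; rewrite cards2 ne; lia.
by apply/subsetP => x; rewrite in_set2 in_setI => /orP[] /eqP ->; apply/andP.
Qed.

Lemma orients_cat g L1 L2 : orients g L1 -> orients g L2 ->
  {in L2, forall e, e \notin edges_of L1} -> orients g (L1 ++ L2).
Proof.
move=> [u1 g1 asym1] [u2 g2 asym2] dis.
have dis' e : e \in L1 -> swap_pair e \notin L2.
  by apply: contraTN => /dis; rewrite inE swap_pairK negb_or => /andP[_ ->].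
split.
- rewrite cat_uniq u1 u2 andbT /=; apply/hasP => -[e /dis].
  by rewrite inE negb_or => /andP[/negPf ->].
- by move=> e; rewrite mem_cat => /orP[/g1|/g2].
- move=> e; rewrite !mem_cat negb_or => /orP[eL|eL]; apply/andP; split.
  + exact: asym1.
  + exact: dis'.
  + by apply: contraTN eL => /dis'; rewrite swap_pairK.
  + exact: asym2.
Qed.

Lemma eulerian_orientation_cat g L1 L2 : irreflexive g ->
  eulerian_orientation g L1 -> eulerian_orientation g L2 ->
  #|vertices_of L1 :&: vertices_of L2| = 1 -> eulerian_orientation g (L1 ++ L2).
Proof.
move=> girr [or1 bal1 con1] [or2 bal2 con2] common.
have [c] : exists c, c \in vertices_of L1 :&: vertices_of L2.
  by apply/set0Pn; rewrite -card_gt0 common.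
rewrite inE => /andP[cV1 cV2].
have [_ g2 _] := or2.
split.
- by apply: orients_cat or1 or2 (edge_disjoint_of_common_le1 girr bal1 bal2 g2 _); rewrite common.
- exact: balanced_cat.
- by rewrite vertices_of_cat edges_of_cat; apply: sub_connectedU cV1 cV2 con1 con2.
Qed.

Definition cycle_arcs s := [seq (x, next s x) | x <- s].

Lemma fst_cycle_arcs s : map fst (cycle_arcs s) = s.
Proof. by rewrite -map_comp map_id. Qed.

Lemma vertices_of_cycle_arcs s : vertices_of (cycle_arcs s) = [set x in s].
Proof. by apply/setP => x; rewrite !inE fst_cycle_arcs. Qed.

Lemma size_cycle_arcs s : size (cycle_arcs s) = size s.
Proof. exact: size_map. Qed.

Lemma next_next_neq s x : uniq s -> 3 <= size s -> x \in s -> next s (next s x) != x.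
Proof.
move=> us ss /rot_to[i p rot_s]; rewrite -!(next_rot i us) rot_s.
have up : uniq (x :: p) by rewrite -rot_s rot_uniq.
have := ss; rewrite -(size_rot i) rot_s.
case: p up {rot_s} => [|y [|z r]] up //= _.
have /= /and3P[/eqP -> /eqP -> _] := cycle_next up.
by move: up; rewrite /= !inE => /andP[/norP[_ /norP[]]]; rewrite eq_sym.
Qed.

Lemma orients_cycle_arcs g s : cycle_in g s -> orients g (cycle_arcs s).
Proof.
case/and3P => ss us cs; split.
- by apply: (@map_uniq _ _ fst); rewrite fst_cycle_arcs.
- by move=> _ /mapP[x xs ->]; apply: next_cycle.
- move=> _ /mapP[x xs ->]; apply/mapP => -[y _ [yE xE]].
  by move: (next_next_neq us ss xs); rewrite yE -xE eqxx.
Qed.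

Lemma balanced_cycle_arcs s : uniq s -> balanced (cycle_arcs s).
Proof.
move=> us; rewrite /balanced fst_cycle_arcs.
have -> : map snd (cycle_arcs s) = map (next s) s by rewrite -map_comp.
apply: uniq_perm => //; first by rewrite (map_inj_uniq (can_inj (prev_next us))).
move=> y; apply/idP/mapP => [ys|[x xs ->]]; last by rewrite mem_next.
by exists (prev s y); rewrite ?mem_prev ?next_prev.
Qed.

Lemma sub_connected_cycle_arcs s : uniq s ->
  sub_connected (vertices_of (cycle_arcs s)) (edges_of (cycle_arcs s)).
Proof.
move=> us x y; rewrite vertices_of_cycle_arcs !inE => xs ys.
apply: connect_cycle xs ys; apply: (cycle_from_next us) => z zs.
by rewrite inE map_f.
Qed.

Lemma eulerian_cycle_arcs g s : cycle_in g s -> eulerian_orientation g (cycle_arcs s).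
Proof.
move=> cs; have /and3P[_ us _] := cs; split.
- exact: orients_cycle_arcs.
- exact: balanced_cycle_arcs.
- exact: sub_connected_cycle_arcs.
Qed.

Lemma ncommon_cycle_arcs s1 s2 :
  ncommon s1 s2 = #|vertices_of (cycle_arcs s1) :&: vertices_of (cycle_arcs s2)|.
Proof. by rewrite !vertices_of_cycle_arcs; apply: eq_card => x; rewrite !inE. Qed.

End ArcLists.

Theorem proposition3p1 (T : finType) (g : rel T)
    (gsym : symmetric g) (girr : irreflexive g) (hG : highly_graceful g) :
  [/\ ~ (exists s, cycle_in g s /\ (size s %% 4 = 1 \/ size s %% 4 = 2)),
      ~ (exists s1 s2, [/\ cycle_in g s1, cycle_in g s2,
            size s1 %% 4 = 3, size s2 %% 4 = 3 & ncommon s1 s2 = 1]) &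
      ~ (exists sl sm sn, [/\ cycle_in g sl, cycle_in g sm, cycle_in g sn,
            [/\ size sl %% 4 = 0, size sm %% 4 = 3 & size sn %% 4 = 3] &
            [/\ ncommon sm sn = 0, ncommon sl sm = 1 & ncommon sl sn = 1]])].
Proof.
have mod4 := eulerian_orientation_mod4 gsym girr hG.
have euler := @eulerian_cycle_arcs T g.
split.
- by case=> s [/euler/mod4]; rewrite size_cycle_arcs; lia.
- case=> s1 [s2 [c1 c2 h1 h2]]; rewrite ncommon_cycle_arcs => h12.
  have := mod4 _ (eulerian_orientation_cat girr (euler _ c1) (euler _ c2) h12).
  by rewrite size_cat !size_cycle_arcs; lia.
- case=> sl [sm [sn [cl cm cn [hl hm hn]]]].
  rewrite !ncommon_cycle_arcs => -[/cards0_eq hmn hlm hln].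
  have elm := eulerian_orientation_cat girr (euler _ cl) (euler _ cm) hlm.
  have hlmn : #|vertices_of (cycle_arcs sl ++ cycle_arcs sm)
                :&: vertices_of (cycle_arcs sn)| = 1.
    by rewrite vertices_of_cat setIUl hmn setU0.
  have := mod4 _ (eulerian_orientation_cat girr elm (euler _ cn) hlmn).
  by rewrite !size_cat !size_cycle_arcs; lia.
Qed.
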